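(* Let $Q$ be a finite connected quandle, $e\in Q$, and let $K_1,K_2$ be oriented knots. If there is a knot $P$ such that $\mathrm{Col}_Q(K_1\# P)\neq \mathrm{Col}_Q(K_2\# P)$, then $\Psi^e_Q(K_1)\neq\Psi^e_Q(K_2)$.
   Context: A quandle is a set $Q$ with operation $*$ satisfying $a*a=a$; unique right division ($\forall b,c\ \exists! a: a*b=c$); and $(a*b)*c=(a*c)*(b*c)$. $R_a(x)=x*a$; $\mathrm{Inn}(Q)$ is the group generated by the $R_a$; $Q$ is connected if $\mathrm{Inn}(Q)$ is transitive on $Q$. A coloring of an oriented knot or tangle diagram by $Q$ assigns elements of $Q$ to arcs so that at each crossing with over-arc color $y$ and incoming under-arc color $x$ (standard sign convention) the other under-arc has color $x*y$. $\mathrm{Col}_Q(K)$ is the number of colorings of a diagram of $K$ by $Q$; $K_1\#P$ is the connected sum. A $1$-tangle is a properly embedded oriented arc in a $3$-ball up to isotopy rel boundary, drawn oriented top to bottom with top arc $b_0$ and bottom arc $b_1$; its closure joins the ends by a trivial arc; every knot $K$ is the closure of a $1$-tangle $T$, unique up to isotopy (end arcs need not have equal colors). For $e\in Q$, $\mathrm{Col}^e_Q(T)$ is the set of colorings $C$ of $T$ with $C(b_0)=e$, and $\Psi^e_Q(K)=\sum_{C\in \mathrm{Col}^e_Q(T)} C(b_1)$, an element of the free $\mathbb{Z}$-module with basis $F_e=\{b\in Q: R_b=R_e\}$. *)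

From mathcomp Require Import all_boot all_order all_fingroup all_algebra.
Set Implicit Arguments. Unset Strict Implicit. Unset Printing Implicit Defensive.

Record quandle := Quandle {
  qT :> finType;
  qop : qT -> qT -> qT;
  qidem : forall a, qop a a = a;
  qdiv : forall b c, exists! a, qop a b = c;
  qdist : forall a b c, qop (qop a b) c = qop (qop a c) (qop b c) }.

Lemma R_inj (Q : quandle) (a : Q) : injective (fun x : Q => qop x a).
Proof.
move=> x y H; have [a' [_ U]] := qdiv a (qop x a).
by rewrite -(U x erefl) (U y (esym H)).
Qed.

Definition Rq (Q : quandle) (a : Q) : {perm Q} := perm (@R_inj Q a).

Definition Inn (Q : quandle) : {set {perm Q}} := <<[set Rq a | a : Q]>>%g.

Definition connected (Q : quandle) : Prop := [transitive Inn Q, on [set: Q] | 'P].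

(** * Knots as closed braid diagrams
   A braid word on n.+1 strands is a sequence of generators (i, s) with
   i : 'I_n; (i, true) is sigma_i, (i, false) is sigma_i^{-1}; the word is
   read top to bottom, all strands oriented downwards. *)
Definition braid (n : nat) := seq ('I_n * bool).

Definition posL n (i : 'I_n) : 'I_n.+1 := widen_ord (leqnSn n) i.
Definition posR n (i : 'I_n) : 'I_n.+1 := lift ord0 i.

(** Colour change across one generator: colours (a, b) at positions
   (i, i+1) above the crossing become, below it,
   sigma_i      : (b, a * b)          (strand i passes under strand i+1),
   sigma_i^{-1} : (b /a, a)           (strand i+1 passes under strand i),
   where b /a is the unique y with y * a = b. *)
Definition gen_act (Q : quandle) n (g : 'I_n * bool) (x : {ffun 'I_n.+1 -> Q})
  : {ffun 'I_n.+1 -> Q} :=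
  let l := posL g.1 in let r := posR g.1 in
  let a := x l in let b := x r in
  [ffun j => if j == l then (if g.2 then b else ((Rq a)^-1)%g b)
             else if j == r then (if g.2 then qop a b else a)
             else x j].

Definition bact (Q : quandle) n (w : braid n) (x : {ffun 'I_n.+1 -> Q}) :=
  foldl (fun y g => gen_act g y) x w.

Definition tswap n (g : 'I_n * bool) (j : 'I_n.+1) : 'I_n.+1 :=
  if j == posL g.1 then posR g.1 else if j == posR g.1 then posL g.1 else j.
Definition bperm n (w : braid n) (j : 'I_n.+1) : 'I_n.+1 :=
  foldl (fun k g => tswap g k) j w.

Definition is_knot n (w : braid n) : bool :=
  [forall j : 'I_n.+1, fconnect (bperm w) ord0 j].

(** Col_Q(closure of w): colourings of the closed braid diagram
   = top colour vectors fixed by the braid action. *)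
Definition Col (Q : quandle) n (w : braid n) : nat :=
  #|[set x : {ffun 'I_n.+1 -> Q} | bact w x == x]|.

(** Connected sum of the closures: w2 is shifted so that its first strand is
   the last strand of w1. *)
Definition csum n1 n2 (w1 : braid n1) (w2 : braid n2) : braid (n1 + n2) :=
  [seq (lshift n2 g.1, g.2) | g <- w1] ++ [seq (rshift n1 g.1, g.2) | g <- w2].

(** Psi^e_Q: the 1-tangle T is the closure of w cut at the top of strand 0;
   b0 = top arc of strand 0, b1 = bottom arc of strand 0.  A colouring of T
   is a top colour vector x with x(0) = b0's colour whose image under the
   braid agrees with x on strands 1..n; its b1 colour is (bact w x)(0).
   The formal sum  sum_C C(b1)  is recorded by its coefficient function
   b |-> #{C : C(b1) = b}. *)
Definition tangle_col (Q : quandle) n (w : braid n) (e : Q) :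
  {set {ffun 'I_n.+1 -> Q}} :=
  [set x : {ffun 'I_n.+1 -> Q} | (x ord0 == e) && [forall j : 'I_n.+1, (j != ord0) ==> (bact w x j == x j)]].

Definition Psi (Q : quandle) (e : Q) n (w : braid n) : {ffun Q -> int} :=
  [ffun b => Posz #|[set x in tangle_col w e | bact w x ord0 == b]|].

From mathcomp Require Import all_boot all_order all_fingroup all_algebra.
From mathcomp Require Import zify.
Set Implicit Arguments. Unset Strict Implicit. Unset Printing Implicit Defensive.

(** A colouring of the connected sum K # P, cut open along the strand where K
   and P meet, is a colouring of a 1-tangle of K together with a colouring of a
   1-tangle of P whose end colours match crosswise.  Hence Col_Q(K # P) is the
   sum, over the colourings C of a 1-tangle of K, of h(top C, bottom C), where
   h(a, b) counts the colourings of a 1-tangle of P from b to a.  Such a sum does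
   not depend on the strand at which the closed braid of K is cut, as long as h
   is Inn(Q)-invariant: moving the cut across a crossing conjugates the braid
   word and moves both end colours by one inner automorphism, since the product
   R_{x_0} ... R_{x_n} is invariant under the braid action, so that the two end
   colours of the cut strand have the same right translation.  Cutting at
   strand 0 and using the transitivity of Inn(Q), the sum is
   |Q| * sum_b Psi^e_Q(K)(b) * h(e, b), so it is determined by Psi^e_Q(K). *)

Section QuandleAutomorphisms.
Variable Q : quandle.

Lemma RqE (a x : Q) : Rq a x = qop x a.
Proof. by rewrite permE. Qed.

Definition qAut : {set {perm Q}} :=
  [set f : {perm Q} | [forall a, [forall b, f (qop a b) == qop (f a) (f b)]]].

Lemma qAutP (f : {perm Q}) :
  reflect (forall a b, f (qop a b) = qop (f a) (f b)) (f \in qAut).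
Proof.
rewrite inE; apply: (iffP forallP) => [fM a b | fM a].
  by apply/eqP; have /forallP := fM a; apply.
by apply/forallP => b; apply/eqP.
Qed.

Lemma group_set_qAut : group_set qAut.
Proof.
apply/group_setP; split; first by apply/qAutP => a b; rewrite !perm1.
by move=> f g /qAutP fM /qAutP gM; apply/qAutP => a b; rewrite !permM fM gM.
Qed.

Canonical qAut_group := Group group_set_qAut.

Lemma Rq_qAut (a : Q) : Rq a \in qAut.
Proof. by apply/qAutP => x y; rewrite !RqE qdist. Qed.

Lemma Rq_Inn (a : Q) : Rq a \in Inn Q.
Proof. by apply: mem_gen; apply: imset_f. Qed.

Lemma Inn_sub_qAut : Inn Q \subset qAut.
Proof.
rewrite (gen_subG _ qAut_group); apply/subsetP => _ /imsetP [a _ ->].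
exact: Rq_qAut.
Qed.

Lemma Rq_aut (f : {perm Q}) (a : Q) : f \in qAut -> Rq (f a) = (Rq a ^ f)%g.
Proof.
move=> /qAutP fM; apply/permP => z.
by rewrite conjgE !permM !RqE fM permKV.
Qed.

End QuandleAutomorphisms.

Section BraidAction.
Variables (Q : quandle) (n : nat).
Implicit Types (x y : {ffun 'I_n.+1 -> Q}) (g : 'I_n * bool) (w : braid n).

Lemma val_posR (i : 'I_n) : val (posR i) = i.+1.
Proof. by rewrite /= /bump leq0n. Qed.

Lemma posL_neq_posR (i : 'I_n) : (posL i == posR i) = false.
Proof. by rewrite -val_eqE val_posR ltn_eqF. Qed.

Lemma posR_neq_posL (i : 'I_n) : (posR i == posL i) = false.
Proof. by rewrite eq_sym posL_neq_posR. Qed.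

Lemma gen_act_out g x k : k != posL g.1 -> k != posR g.1 -> gen_act g x k = x k.
Proof. by move=> /negbTE kL /negbTE kR; rewrite ffunE kL kR. Qed.

Definition agree_off (j : 'I_n.+1) x y := forall k, k != j -> x k = y k.

Definition gen_inv g : 'I_n * bool := (g.1, ~~ g.2).

Lemma gen_actK g : cancel (@gen_act Q n g) (gen_act (gen_inv g)).
Proof.
case: g => i s x; apply/ffunP => j; rewrite !ffunE /= !eqxx posR_neq_posL.
case: ifP => [/eqP-> | jL]; first by case: s; rewrite /= ?permKV -?RqE ?permK.
case: ifP => [/eqP-> | jR]; last by rewrite jL jR.
by case: s; rewrite /= -?RqE ?permK ?permKV.
Qed.

Lemma gen_act_inj g : injective (@gen_act Q n g).
Proof. exact: can_inj (gen_actK g). Qed.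

Lemma tswapK g : involutive (tswap g).
Proof.
move=> j; rewrite /tswap.
case: (eqVneq j (posL g.1)) => [-> | jL]; first by rewrite posR_neq_posL eqxx.
by case: (eqVneq j (posR g.1)) => [-> | jR]; rewrite ?eqxx // (negbTE jL) (negbTE jR).
Qed.

Lemma bact_rcons w g x : bact (rcons w g) x = gen_act g (bact w x).
Proof. exact: foldl_rcons. Qed.

Definition col_map (f : {perm Q}) x : {ffun 'I_n.+1 -> Q} := [ffun i => f (x i)].

Lemma col_map_inj (f : {perm Q}) : injective (col_map f).
Proof.
move=> x y /ffunP xy; apply/ffunP => i.
by apply: (@perm_inj _ f); have := xy i; rewrite !ffunE.
Qed.

Lemma gen_act_col_map g (f : {perm Q}) x :
  f \in qAut Q -> gen_act g (col_map f x) = col_map f (gen_act g x).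
Proof.
move=> fA; have /qAutP fM := fA; apply/ffunP => j; rewrite !ffunE.
case: (j == _); first by case: g.2; rewrite // Rq_aut // -conjVg conjgE !permM permK.
by case: (j == _); case: g.2; rewrite ?fM.
Qed.

Lemma bact_col_map w (f : {perm Q}) x :
  f \in qAut Q -> bact w (col_map f x) = col_map f (bact w x).
Proof. by move=> fA; elim: w x => [|g w IHw] x //=; rewrite gen_act_col_map // IHw. Qed.

End BraidAction.

Section TranslationProduct.
Variables (Q : quandle) (n : nat).
Implicit Types (x y : {ffun 'I_n.+1 -> Q}).

Definition Rprod x (a b : nat) : {perm Q} := (\prod_(a <= k < b) Rq (x (inord k)))%g.

Lemma eq_Rprod x y a b :
  (forall k, a <= k < b -> x (inord k) = y (inord k)) -> Rprod x a b = Rprod y a b.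
Proof. by move=> xy; apply: eq_big_nat => k /xy ->. Qed.

Lemma Rprod_split x (j : 'I_n.+1) :
  Rprod x 0 n.+1 = (Rprod x 0 j * (Rq (x j) * Rprod x j.+1 n.+1))%g.
Proof.
rewrite /Rprod (big_cat_nat (n := j)) ?(ltnW (ltn_ord j)) //.
by rewrite (big_ltn (m := j)) // inord_val.
Qed.

Lemma Rprod_split_pair x (i : 'I_n) :
  Rprod x 0 n.+1 =
  (Rprod x 0 i * (Rq (x (posL i)) * Rq (x (posR i))) * Rprod x i.+2 n.+1)%g.
Proof.
rewrite (Rprod_split x (posL i)) /Rprod (big_ltn (m := i.+1)) ?ltnS //.
have -> : inord i.+1 = posR i.
  by apply: val_inj; rewrite val_posR /= inordK ?ltnS.
by rewrite !mulgA.
Qed.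

Lemma Rq_gen_act_pair (i : 'I_n) s x :
  let x' := gen_act (i, s) x in
  (Rq (x' (posL i)) * Rq (x' (posR i)))%g = (Rq (x (posL i)) * Rq (x (posR i)))%g.
Proof.
rewrite /= !ffunE eqxx posR_neq_posL eqxx /=.
case: s; first by rewrite -RqE Rq_aut ?Rq_qAut // -conjgC.
by rewrite Rq_aut ?groupV ?Rq_qAut // -conjgCV.
Qed.

Lemma Rprod_gen_act (g : 'I_n * bool) x :
  Rprod (gen_act g x) 0 n.+1 = Rprod x 0 n.+1.
Proof.
case: g => i s; rewrite !(Rprod_split_pair _ i) Rq_gen_act_pair.
have ltin := ltn_ord i.
congr (_ * _ * _)%g; apply: eq_Rprod => k /andP [lek ltk];
  by apply: gen_act_out; rewrite -val_eqE ?val_posR /= inordK; lia.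
Qed.

Lemma Rprod_bact (w : braid n) x : Rprod (bact w x) 0 n.+1 = Rprod x 0 n.+1.
Proof. by elim: w x => [|g w IHw] x //=; rewrite IHw Rprod_gen_act. Qed.

Lemma Rq_eq_of_Rprod x y (j : 'I_n.+1) :
  agree_off j x y -> Rprod x 0 n.+1 = Rprod y 0 n.+1 ->
  Rq (x j) = Rq (y j).
Proof.
move=> xy; have ltjn := ltn_ord j.
have xy_off k : (0 <= k < j) || (j < k < n.+1) -> x (inord k) = y (inord k).
  by move=> rk; apply: xy; rewrite -val_eqE /= inordK; lia.
rewrite !(Rprod_split _ j) (eq_Rprod (a := 0) (y := y)) => [|k rk]; last first.
  by apply: xy_off; rewrite rk.
rewrite (eq_Rprod (a := j.+1) (y := y)) => [|k rk]; last by apply: xy_off; rewrite rk orbT.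
by move=> /mulgI /mulIg.
Qed.

End TranslationProduct.

Section CutSum.
Variables (Q : quandle) (n : nat).
Implicit Types (x y : {ffun 'I_n.+1 -> Q}) (g : 'I_n * bool) (w : braid n).

Definition cut_col w (j : 'I_n.+1) : {set {ffun 'I_n.+1 -> Q}} :=
  [set x | [forall k, (k != j) ==> (bact w x k == x k)]].

Lemma cut_colP w j x : reflect (agree_off j (bact w x) x) (x \in cut_col w j).
Proof.
rewrite inE; apply: (iffP forallP) => [xfix k kj | xfix k].
  by apply/eqP; have := xfix k; rewrite kj.
by apply/implyP => /xfix ->.
Qed.

Lemma Rq_cut_col w j x : x \in cut_col w j -> Rq (bact w x j) = Rq (x j).
Proof. by move=> /cut_colP xfix; apply: Rq_eq_of_Rprod; rewrite ?Rprod_bact. Qed.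

Lemma gen_act_agree_off g j x y :
  agree_off j x y -> Rq (x j) = Rq (y j) ->
  agree_off (tswap g j) (gen_act g x) (gen_act g y).
Proof.
case: g => i s; rewrite /tswap /=.
case: (eqVneq j (posL i)) => [-> | jL] xy Rxy.
  have xyR : x (posR i) = y (posR i) by rewrite xy // posR_neq_posL.
  move=> k kR; rewrite !ffunE (negbTE kR).
  by case: ifP => [_ | kL]; [case: s; rewrite ?xyR ?Rxy | rewrite xy ?kL].
move: xy Rxy; case: (eqVneq j (posR i)) => [-> | jR] xy Rxy.
  have xyL : x (posL i) = y (posL i) by rewrite xy // posL_neq_posR.
  move=> k kL; rewrite !ffunE (negbTE kL).
  by case: ifP => [_ | kR]; [case: s; rewrite /= ?xyL // -!RqE Rxy | rewrite xy ?kR].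
have xyL : x (posL i) = y (posL i) by rewrite xy // eq_sym.
have xyR : x (posR i) = y (posR i) by rewrite xy // eq_sym.
by move=> k kj; rewrite !ffunE xyL xyR; do 2?case: ifP => _ //; rewrite xy.
Qed.

Lemma gen_act_tswap g j x y :
  agree_off j x y -> exists2 f, f \in Inn Q &
    gen_act g x (tswap g j) = f (x j) /\ gen_act g y (tswap g j) = f (y j).
Proof.
case: g => i s; rewrite /tswap /=.
case: (eqVneq j (posL i)) => [-> | jL] xy.
  rewrite !ffunE posR_neq_posL eqxx /=; case: s.
    exists (Rq (x (posR i))); first exact: Rq_Inn.
    by rewrite -!RqE xy ?posR_neq_posL.
  by exists 1%g; rewrite ?group1 ?perm1.
move: xy; case: (eqVneq j (posR i)) => [-> | jR] xy; rewrite !ffunE ?eqxx /=.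
  case: s; first by exists 1%g; rewrite ?group1 ?perm1.
  exists (Rq (x (posL i)))^-1%g; first by rewrite groupV Rq_Inn.
  by rewrite xy ?posL_neq_posR.
by exists 1%g; rewrite ?group1 // !perm1 (negbTE jL) (negbTE jR).
Qed.

Definition Inn_invariant (h : Q -> Q -> nat) :=
  forall f, f \in Inn Q -> forall a b, h (f a) (f b) = h a b.

Variables (h : Q -> Q -> nat).
Hypothesis h_inv : Inn_invariant h.

Definition cut_sum w j := \sum_(x in cut_col w j) h (x j) (bact w x j).

Lemma cut_col_rot g u j x :
  (gen_act g x \in cut_col (rcons u g) (tswap g j)) = (x \in cut_col (g :: u) j).
Proof.
have bact_rot : bact (rcons u g) (gen_act g x) = gen_act g (bact (g :: u) x).
  by rewrite bact_rcons.
apply/idP/idP => xcut.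
  have := gen_act_agree_off (g := gen_inv g) (cut_colP _ _ _ xcut) (Rq_cut_col xcut).
  rewrite bact_rot (_ : tswap (gen_inv g) = tswap g) // tswapK !gen_actK.
  by move/cut_colP.
have := gen_act_agree_off (g := g) (cut_colP _ _ _ xcut) (Rq_cut_col xcut).
by rewrite -bact_rot => /cut_colP.
Qed.

Lemma cut_sum_rot g u j : cut_sum (g :: u) j = cut_sum (rcons u g) (tswap g j).
Proof.
rewrite /cut_sum [RHS](reindex_inj (gen_act_inj (g := g))).
apply: eq_big => [x | x xcut]; first by rewrite cut_col_rot.
rewrite bact_rcons; have [f fInn [-> ->]] := gen_act_tswap g (cut_colP _ _ _ xcut).
by rewrite h_inv.
Qed.

Lemma cut_sum_rot_cat p u j : cut_sum (p ++ u) j = cut_sum (u ++ p) (bperm p j).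
Proof.
elim: p u j => [|g p IHp] u j /=; first by rewrite cats0.
by rewrite cut_sum_rot rcons_cat IHp cat_rcons.
Qed.

Lemma cut_sum_knot w j : is_knot w -> cut_sum w j = cut_sum w ord0.
Proof.
move=> /forallP /(_ j) /iter_findex <-; elim: (findex _ _ _) => //= k <-.
by have := cut_sum_rot_cat w [::] (iter k (bperm w) ord0); rewrite cats0 /= => ->.
Qed.

End CutSum.

Arguments cut_col {Q n}.

Section ConnectedQuandle.
Variables (Q : quandle) (n : nat).
Implicit Types (x : {ffun 'I_n.+1 -> Q}) (w : braid n).

Lemma cut_col_map w j (f : {perm Q}) x :
  f \in qAut Q -> (col_map f x \in cut_col w j) = (x \in cut_col w j).
Proof.
move=> fA; apply/cut_colP/cut_colP => xfix k /xfix; rewrite bact_col_map // !ffunE.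
  exact: perm_inj.
by move->.
Qed.

Lemma in_tangle_col w (e : Q) x :
  (x \in tangle_col w e) = (x \in cut_col w ord0) && (x ord0 == e).
Proof. by rewrite !inE andbC. Qed.

Lemma connected_Inn_orbit (e c : Q) : connected Q -> exists2 f, f \in Inn Q & f e = c.
Proof.
move=> /atransP /(_ e (in_setT e)) orbit_e.
have /orbitP [f fInn <-] : c \in orbit 'P (Inn Q) e by rewrite orbit_e in_setT.
by exists f.
Qed.

Lemma cut_sum_connected (e : Q) (h : Q -> Q -> nat) w :
  connected Q -> Inn_invariant h ->
  cut_sum h w ord0 = #|Q| * \sum_(x in tangle_col w e) h e (bact w x ord0).
Proof.
move=> conQ h_inv; rewrite /cut_sum (partition_big (fun x => x ord0) predT) //=.
rewrite -sum_nat_const; apply: eq_bigr => c _.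
have [f fInn fe] := connected_Inn_orbit e c conQ.
have fA : f \in qAut Q by apply: subsetP fInn; apply: Inn_sub_qAut.
rewrite (reindex_inj (col_map_inj (f := f))); apply: eq_big => x.
  by rewrite in_tangle_col cut_col_map // ffunE -fe (inj_eq perm_inj).
move=> /andP [_ /eqP]; rewrite ffunE -fe => /perm_inj x0e.
by rewrite bact_col_map // !ffunE h_inv // x0e.
Qed.

Lemma sum_tangle_col_Psi (e : Q) w (F : Q -> nat) :
  \sum_(x in tangle_col w e) F (bact w x ord0) = \sum_(b : Q) `|Psi e w b|%N * F b.
Proof.
rewrite (partition_big (fun x => bact w x ord0) predT) //=.
apply: eq_bigr => b _; rewrite ffunE /= -sum_nat_const.
by apply: eq_big => [x | x /andP [_ /eqP ->]]; rewrite ?inE.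
Qed.

End ConnectedQuandle.

Section Shift.
Variables (Q : quandle) (N n c : nat).
Hypothesis le_cn_N : c + n <= N.
Implicit Types (x : {ffun 'I_N.+1 -> Q}).

Definition shift_col x : {ffun 'I_n.+1 -> Q} := [ffun k : 'I_n.+1 => x (inord (c + k))].

Lemma inord_shift_pos (i : 'I_n) (i' : 'I_N) : val i' = c + i ->
  inord (c + posL i) = posL i' /\ inord (c + posR i) = posR i'.
Proof.
have ltin := ltn_ord i; move=> i'E.
by split; apply: val_inj; rewrite ?val_posR /= inordK ?i'E; lia.
Qed.

Lemma gen_act_shift (i : 'I_n) (i' : 'I_N) s x : val i' = c + i ->
  shift_col (gen_act (i', s) x) = gen_act (i, s) (shift_col x).
Proof.
move=> i'E; have [EL ER] := inord_shift_pos i'E.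
apply/ffunP => k; have ltkn := ltn_ord k.
rewrite !ffunE /= EL ER -!(inj_eq val_inj) ?val_posR /= inordK; last by lia.
by rewrite i'E -addnS !eqn_add2l.
Qed.

Variable f : 'I_n -> 'I_N.
Hypothesis val_f : forall i, val (f i) = c + i.

Definition shift_braid (w : braid n) : braid N := [seq (f g.1, g.2) | g <- w].

Lemma bact_shift w x : shift_col (bact (shift_braid w) x) = bact w (shift_col x).
Proof. by elim: w x => [|[i s] w IHw] x //=; rewrite IHw (gen_act_shift (i := i)). Qed.

Lemma bact_shift_out w x (k : 'I_N.+1) :
  (k < c) || (c + n < k) -> bact (shift_braid w) x k = x k.
Proof.
move=> k_out; elim: w x => [|[i s] w IHw] x //=; rewrite IHw.
have ltin := ltn_ord i; have i_val := val_f i.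
by apply: gen_act_out; rewrite -val_eqE ?val_posR /= i_val; lia.
Qed.

End Shift.

Definition tangle_count (Q : quandle) m (P : braid m) (a b : Q) : nat :=
  #|[set v in cut_col P ord0 | (v ord0 == a) && (bact P v ord0 == b)]|.

Lemma tangle_count_Inn_invariant (Q : quandle) m (P : braid m) :
  Inn_invariant (fun a b : Q => tangle_count P b a).
Proof.
move=> f /(subsetP (Inn_sub_qAut Q)) fA a b.
rewrite /tangle_count -(card_preimset _ (col_map_inj (f := f))); apply: eq_card => v.
rewrite inE [in RHS]inE [col_map f v \in _]inE cut_col_map // bact_col_map //.
by rewrite !ffunE !(inj_eq perm_inj).
Qed.

Section ConnectedSum.
Variables (Q : quandle) (n1 m : nat) (K : braid n1) (P : braid m).
Implicit Types (x : {ffun 'I_(n1 + m).+1 -> Q}).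

Local Notation left_col := (shift_col n1 0).
Local Notation right_col := (shift_col m n1).
Local Notation K' := (shift_braid (lshift m) K).
Local Notation P' := (shift_braid (@rshift n1 m) P).

Lemma right_col_seam x : right_col x ord0 = left_col x ord_max.
Proof. by rewrite !ffunE /= addn0. Qed.

Lemma left_right_col_inj x x' :
  left_col x = left_col x' -> right_col x = right_col x' -> x = x'.
Proof.
move=> /ffunP xxL /ffunP xxR; apply/ffunP => q; have ltq := ltn_ord q.
case: (leqP q n1) => [leq1 | ltq1].
  by have := xxL (inord q); rewrite !ffunE /= inordK // inord_val.
have := xxR (inord (q - n1)); rewrite !ffunE /= inordK; last by lia.
by rewrite subnKC ?inord_val // ltnW.
Qed.

Lemma left_col_K' x : left_col (bact K' x) = bact K (left_col x).
Proof. exact: (@bact_shift Q _ _ 0 (leq_addr m n1) (lshift m)). Qed.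

Lemma right_col_P' x : right_col (bact P' x) = bact P (right_col x).
Proof. exact: (@bact_shift Q _ _ n1 (leqnn _) (@rshift n1 m)). Qed.

Lemma right_col_K'_out x k : k != ord0 -> right_col (bact K' x) k = right_col x k.
Proof.
move=> k0; have ltkm := ltn_ord k.
have lt0k : 0 < k by rewrite lt0n; apply: contra k0 => /eqP k0; apply/eqP/val_inj.
by rewrite !ffunE (@bact_shift_out Q _ _ 0 (leq_addr m n1) (lshift m)) //= inordK; lia.
Qed.

Lemma left_col_P'_out x k : k != ord_max -> left_col (bact P' x) k = left_col x k.
Proof.
move=> kmax; have ltkn : k < n1.
  rewrite ltn_neqAle -ltnS ltn_ord andbT.
  by apply: contra kmax => /eqP k_n1; apply/eqP/val_inj.
by rewrite !ffunE (@bact_shift_out Q _ _ n1 (leqnn _) (@rshift n1 m)) //= inordK; lia.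
Qed.

Definition seam_split x := (left_col x, right_col (bact K' x)).

Definition seam_col (p : {ffun 'I_n1.+1 -> Q} * {ffun 'I_m.+1 -> Q}) : bool :=
  [&& p.1 \in cut_col K ord_max, p.2 \in cut_col P ord0,
      p.2 ord0 == bact K p.1 ord_max & bact P p.2 ord0 == p.1 ord_max].

Lemma seam_split_seam x : (seam_split x).2 ord0 = bact K (left_col x) ord_max.
Proof. by rewrite right_col_seam left_col_K'. Qed.

Lemma seam_split_inj : injective seam_split.
Proof.
move=> x x' [xxL /ffunP xxR]; apply: left_right_col_inj => //.
apply/ffunP => k; case: (eqVneq k ord0) => [-> | k0]; first by rewrite !right_col_seam xxL.
by have := xxR k; rewrite !right_col_K'_out.
Qed.

Lemma csum_fixedE x : (bact (csum K P) x == x) = seam_col (seam_split x).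
Proof.
rewrite /seam_col /csum /bact foldl_cat -!/(bact _ _) /= seam_split_seam eqxx /=.
set y := bact K' x; set z := bact P' y.
have lz k : k != ord_max -> left_col z k = bact K (left_col x) k.
  by move=> kmax; rewrite left_col_P'_out // left_col_K'.
have lz_max : left_col z ord_max = bact P (right_col y) ord0.
  by rewrite -right_col_seam right_col_P'.
apply/eqP/and3P => [zx | [/cut_colP Kfix /cut_colP Pfix /eqP seam]].
  split; last by rewrite -lz_max zx.
    by apply/cut_colP => k kmax; rewrite -lz // zx.
  apply/cut_colP => k k0; rewrite -right_col_P' -/z zx right_col_K'_out //.
apply: left_right_col_inj; apply/ffunP => k.
  by case: (eqVneq k ord_max) => [-> | kmax]; rewrite ?lz_max ?seam // lz ?Kfix.
case: (eqVneq k ord0) => [-> | k0]; rewrite right_col_P'.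
  by rewrite !right_col_seam -seam -right_col_P' right_col_seam.
by rewrite Pfix // right_col_K'_out.
Qed.

Definition seam_glue (p : {ffun 'I_n1.+1 -> Q} * {ffun 'I_m.+1 -> Q}) :
  {ffun 'I_(n1 + m).+1 -> Q} :=
  [ffun q : 'I_(n1 + m).+1 => if q <= n1 then p.1 (inord q) else p.2 (inord (q - n1))].

Lemma seam_split_glue (p : {ffun 'I_n1.+1 -> Q} * {ffun 'I_m.+1 -> Q}) :
  p.2 ord0 = bact K p.1 ord_max -> seam_split (seam_glue p) = p.
Proof.
have left_glue : left_col (seam_glue p) = p.1.
  apply/ffunP => k; have ltkn := ltn_ord k.
  by rewrite !ffunE /= inordK add0n; [rewrite -ltnS ltkn inord_val | lia].
case: p left_glue => u v /= left_glue seam; rewrite /seam_split left_glue; congr pair.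
apply/ffunP => k; case: (eqVneq k ord0) => [-> | k0].
  by rewrite right_col_seam left_col_K' left_glue seam.
have lt0k : 0 < k by rewrite lt0n; apply: contra k0 => /eqP k0; apply/eqP/val_inj.
have ltkm := ltn_ord k.
rewrite right_col_K'_out // !ffunE /= inordK; last by lia.
by rewrite ifN ?addKn ?inord_val // -ltnNge -{1}[n1]addn0 ltn_add2l.
Qed.

Lemma Col_csum :
  Col Q (csum K P) = cut_sum (fun a b : Q => tangle_count P b a) K ord_max.
Proof.
have fixE : [set x | bact (csum K P) x == x] = seam_split @^-1: [set p | seam_col p].
  by apply/setP => x; rewrite !inE csum_fixedE.
have split_onto :
    seam_split @: (seam_split @^-1: [set p | seam_col p]) = [set p | seam_col p].
  apply/setP => p; apply/imsetP/idP => [[x] | ]; first by rewrite !inE => ? ->.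
  rewrite inE => pseam; have /and4P [_ _ /eqP seam _] := pseam.
  by exists (seam_glue p); rewrite ?inE seam_split_glue.
rewrite /Col fixE -(card_imset _ seam_split_inj) split_onto.
rewrite /cut_sum /tangle_count -sum1_card.
under [RHS]eq_bigr do rewrite -sum1_card.
by rewrite pair_big_dep; apply: eq_bigl => -[u v]; rewrite !inE /seam_col /= !inE.
Qed.

End ConnectedSum.

Theorem mainTheorem2 (Q : quandle) (e : Q) (n1 n2 : nat)
    (K1 : braid n1) (K2 : braid n2) :
  connected Q -> is_knot K1 -> is_knot K2 ->
  (exists (m : nat) (P : braid m),
      is_knot P /\ Col Q (csum K1 P) <> Col Q (csum K2 P)) ->
  Psi e K1 <> Psi e K2.
Proof.
move=> conQ knot1 knot2 [m [P [_ Col_neq]]] Psi_eq; apply: Col_neq.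
have h_inv := @tangle_count_Inn_invariant Q m P.
rewrite !Col_csum !(cut_sum_knot h_inv) //.
rewrite !(cut_sum_connected e _ conQ h_inv).
by rewrite !(sum_tangle_col_Psi e _ (tangle_count P ^~ e)) Psi_eq.
Qed.
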